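(* Let $\mathbf p=(p_1,p_2,p_3,p_4)$ be an agreeable memory-one strategy for X with $\mathbf p\neq(1,1,0,0)$. Then $\mathbf p$ is of Nash type if and only if $$\frac{T-R}{R-S}\,p_3\le 1-p_2\qquad\text{and}\qquad \frac{T-R}{R-P}\,p_4\le 1-p_2 .$$ Moreover, $\mathbf p$ is good if and only if both of these inequalities are strict.
   Context: Iterated Prisoner's Dilemma: payoffs $T>R>P>S$ with $2R>T+S$; outcomes of a round are ordered $cc,cd,dc,dd$ (first letter X's play, second Y's; $c$ = cooperate, $d$ = defect); payoff vectors $\mathbf S_X=(R,S,T,P)$, $\mathbf S_Y=(R,T,S,P)$. A memory-one strategy for X is $\mathbf p=(p_1,p_2,p_3,p_4)\in[0,1]^4$, where $p_i$ is the probability that X plays $c$ in the next round given that the current round had the $i$-th outcome. A strategy pattern for Y is an arbitrary (possibly randomized and history-dependent) rule for Y's play in each round. Given initial plays and the rules used, let $\mathbf v^n$ be the probability distribution of the outcome of round $n$; a limit distribution is any limit point $\mathbf v$ of the Cesàro averages $\frac1n\sum_{k=1}^n\mathbf v^k$, and the associated expected payoffs are $s_X=\langle\mathbf v\cdot\mathbf S_X\rangle$, $s_Y=\langle\mathbf v\cdot\mathbf S_Y\rangle$. $\mathbf p$ is agreeable if $p_1=1$. $\mathbf p$ is of Nash type if it is agreeable and, for every strategy pattern of Y and every associated limit distribution, $s_Y\ge R$ implies $s_Y=R$. $\mathbf p$ is good if it is agreeable and, for every strategy pattern of Y and every associated limit distribution, $s_Y\ge R$ implies $s_Y=s_X=R$.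 *)

From mathcomp Require Import all_boot all_order all_algebra.
From mathcomp Require Import reals.
Set Implicit Arguments. Unset Strict Implicit. Unset Printing Implicit Defensive.
Import Order.TTheory GRing.Theory Num.Theory.
Local Open Scope ring_scope.

(* Outcomes of a round, ordered cc, cd, dc, dd  as 0,1,2,3
   (first letter = X's play, second = Y's play). *)
Definition outcome := 'I_4.

Definition x_coop (o : outcome) : bool := (val o < 2)%N.
Definition y_coop (o : outcome) : bool := (val o == 0%N) || (val o == 2%N).

Section IPD.
Variable R : realType.

Definition vec4 (a1 a2 a3 a4 : R) (o : outcome) : R :=
  match val o with 0 => a1 | 1 => a2 | 2 => a3 | _ => a4 end.

(* Probability of a given play (b = true: cooperate) when cooperation
   has probability q. *)
Definition fac (q : R) (b : bool) : R := if b then q else 1 - q.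

(* A strategy pattern for Y: y h = probability that Y cooperates in the next
   round given the full history h of previous outcomes (most recent first);
   y [::] is Y's (possibly randomized) initial play. *)
Definition valid_pattern (y : seq outcome -> R) : Prop :=
  forall h, 0 <= y h <= 1.

(* Probability of the history h (most recent outcome first), when X plays c
   initially with probability x0 and afterwards uses the memory-one strategy
   p, and Y uses the pattern y (plays conditionally independent given the
   past). *)
Definition step (x0 : R) (p : outcome -> R) (y : seq outcome -> R)
  (past : seq outcome) (o : outcome) : R :=
  match past with
  | [::] => fac x0 (x_coop o) * fac (y [::]) (y_coop o)
  | o' :: _ => fac (p o') (x_coop o) * fac (y past) (y_coop o)
  end.

Fixpoint hprob (x0 : R) (p : outcome -> R) (y : seq outcome -> R)
  (h : seq outcome) : R :=
  match h with
  | [::] => 1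
  | o :: h' => hprob x0 p y h' * step x0 p y h' o
  end.

(* v^n : distribution of the outcome of round n (n >= 1). *)
Definition vdist (x0 : R) (p : outcome -> R) (y : seq outcome -> R)
  (n : nat) (o : outcome) : R :=
  \sum_(h : n.-tuple outcome | ohead h == Some o) hprob x0 p y h.

Definition cesaro (x0 : R) (p : outcome -> R) (y : seq outcome -> R)
  (n : nat) (o : outcome) : R :=
  (n%:R)^-1 * \sum_(1 <= k < n.+1) vdist x0 p y k o.

Definition limit_dist (x0 : R) (p : outcome -> R) (y : seq outcome -> R)
  (v : outcome -> R) : Prop :=
  forall eps : R, 0 < eps -> forall N : nat, exists n : nat,
    (N <= n)%N /\ forall o, `|cesaro x0 p y n o - v o| < eps.

Definition payX (T Rw P S : R) (v : outcome -> R) : R :=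
  \sum_(o : outcome) v o * vec4 Rw S T P o.
Definition payY (T Rw P S : R) (v : outcome -> R) : R :=
  \sum_(o : outcome) v o * vec4 Rw T S P o.

Definition agreeable (p : outcome -> R) : Prop := p ord0 = 1.

(* Quantification "for every strategy pattern of Y and every associated
   limit distribution" also ranges over X's (possibly randomized) initial
   play x0. *)
Definition nash_type (T Rw P S : R) (p : outcome -> R) : Prop :=
  agreeable p /\
  forall (x0 : R) (y : seq outcome -> R) (v : outcome -> R),
    0 <= x0 <= 1 -> valid_pattern y -> limit_dist x0 p y v ->
    Rw <= payY T Rw P S v -> payY T Rw P S v = Rw.

Definition good (T Rw P S : R) (p : outcome -> R) : Prop :=
  agreeable p /\
  forall (x0 : R) (y : seq outcome -> R) (v : outcome -> R),
    0 <= x0 <= 1 -> valid_pattern y -> limit_dist x0 p y v ->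
    Rw <= payY T Rw P S v ->
    payY T Rw P S v = Rw /\ payX T Rw P S v = Rw.

End IPD.

From mathcomp Require Import all_boot all_order all_algebra.
From mathcomp Require Import reals.
From mathcomp Require Import ring lra.
Import Order.TTheory GRing.Theory Num.Theory.
Local Open Scope ring_scope.
Set Implicit Arguments. Unset Strict Implicit.

(* Let v be a limit distribution of play against p = (1, p2, p3, p4).  The
   probability that X cooperates in round n+1 is the p-average of the outcome
   distribution of round n, so the Cesaro averages telescope and v satisfies
   Akin's identity v_cd (1 - p2) = v_dc p3 + v_dd p4.  Eliminating v_cc and v_cd
   from Y's payoff gives
     (1 - p2) (s_Y - R) = v_dc gain_dc + v_dd gain_dd,
   where gain_dc = (T-R) p3 - (1-p2)(R-S) and gain_dd = (T-R) p4 - (1-p2)(R-P)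
   are the two inequalities of the theorem with denominators cleared.  If both
   gains are <= 0, then p2 < 1 (this is where p <> (1,1,0,0) is needed) and
   s_Y <= R; if both are < 0 and s_Y = R, then v sits on cc, so s_X = R.
   Conversely, gains are witnessed by stationary plays: a Y that defects after
   cc with probability p3 and cooperates otherwise gets
   s_Y - R = gain_dc / (2 + p3 - p2), and an always-defecting Y gets
   s_Y - R = gain_dd / (1 - p2 + p4), in both cases leaving X below R when the
   gain is zero. *)

Notation cc := (@Ordinal 4 0 isT).
Notation cd := (@Ordinal 4 1 isT).
Notation dc := (@Ordinal 4 2 isT).
Notation dd := (@Ordinal 4 3 isT).

Lemma big_tupleS (T : finType) (V : nmodType) n (F : n.+1.-tuple T -> V) :
  \sum_(t : n.+1.-tuple T) F t = \sum_(t : n.-tuple T) \sum_(a : T) F (cons_tuple a t).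
Proof.
rewrite exchange_big pair_big /=.
rewrite (reindex (fun at' : T * n.-tuple T => cons_tuple at'.1 at'.2)) //=.
exists (fun t => (thead t, behead_tuple t)) => [[a t] _ | t _] /=.
  by rewrite theadE; congr pair; apply: val_inj.
by rewrite [in RHS](tuple_eta t); apply: val_inj.
Qed.

Lemma big_tuple0 (T : finType) (V : nmodType) (F : 0.-tuple T -> V) :
  \sum_(t : 0.-tuple T) F t = F [tuple].
Proof. by rewrite (big_pred1 [tuple]) // => t; apply/esym/eqP; exact: tuple0. Qed.

Lemma eventually_div_natS_lt (R : archiRealFieldType) (C eps : R) :
  0 < eps -> exists m, forall n, (m <= n)%N -> C / n.+1%:R < eps.
Proof.
move=> eps_gt0; exists (Num.truncn (C / eps)) => n le_mn.
have lt_Cn : C / eps < n.+1%:R.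
  by apply: lt_le_trans (truncnS_gt _) _; rewrite ler_nat ltnS.
by rewrite ltr_pdivrMr // mulrC -ltr_pdivrMr.
Qed.

Section Play.
Variable R : realType.

Definition memory_one (p : outcome -> R) : Prop := forall o, 0 <= p o <= 1.

Definition akin_distribution (p v : outcome -> R) : Prop :=
  [/\ forall o, 0 <= v o, \sum_o v o = 1 & \sum_o v o * (p o - (x_coop o)%:R) = 0].

Lemma sum_outcome (F : outcome -> R) : \sum_o F o = F cc + F cd + F dc + F dd.
Proof.
rewrite !big_ord_recl big_ord0 addr0 !addrA.
by congr (_ + _ + _ + _); congr F; apply: val_inj.
Qed.

Lemma sum_fac (a b : R) : \sum_o fac a (x_coop o) * fac b (y_coop o) = 1.
Proof. rewrite sum_outcome /=; ring. Qed.

Lemma sum_xcoop_fac (a b : R) :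
  \sum_o (x_coop o)%:R * (fac a (x_coop o) * fac b (y_coop o)) = a.
Proof. rewrite sum_outcome /=; ring. Qed.

Lemma fac_ge0 (a : R) b : 0 <= a <= 1 -> 0 <= fac a b.
Proof. by case/andP=> ? ?; case: b => /=; lra. Qed.

Variables (x0 : R) (p : outcome -> R) (y : seq outcome -> R).
Hypotheses (x0_range : 0 <= x0 <= 1) (p_range : memory_one p) (y_range : valid_pattern y).

Lemma sum_step h : \sum_o step x0 p y h o = 1.
Proof. by case: h => [|o' h]; rewrite /= sum_fac. Qed.

Lemma vdistS n o : vdist x0 p y n.+1 o = \sum_(t : n.-tuple outcome) hprob x0 p y (o :: t).
Proof.
rewrite /vdist big_mkcond big_tupleS; apply: eq_bigr => t _.
rewrite (bigD1 o) //= eqxx big1 ?addr0 // => o' neq_o'o.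
by case: eqP => // -[eq_o'o]; rewrite eq_o'o eqxx in neq_o'o.
Qed.

Lemma vdist1 o : vdist x0 p y 1 o = fac x0 (x_coop o) * fac (y [::]) (y_coop o).
Proof. by rewrite vdistS big_tuple0 /= mul1r. Qed.

Lemma vdistSS k o' :
  vdist x0 p y k.+2 o' =
  \sum_o \sum_(t : k.-tuple outcome)
     hprob x0 p y (o :: t) * (fac (p o) (x_coop o') * fac (y (o :: t)) (y_coop o')).
Proof. by rewrite vdistS big_tupleS exchange_big. Qed.

Lemma vdistSS_markov k (g : outcome -> R) o' :
  (forall o (t : k.-tuple outcome), y (o :: t) = g o) ->
  vdist x0 p y k.+2 o' =
  \sum_o vdist x0 p y k.+1 o * (fac (p o) (x_coop o') * fac (g o) (y_coop o')).
Proof.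
move=> yg; rewrite vdistSS; apply: eq_bigr => o _.
by rewrite vdistS mulr_suml; apply: eq_bigr => t _; rewrite yg.
Qed.

Lemma sum_hprob n : \sum_(t : n.-tuple outcome) hprob x0 p y t = 1.
Proof.
elim: n => [|n IH]; first by rewrite big_tuple0.
rewrite big_tupleS -[RHS]IH; apply: eq_bigr => t _ /=.
by rewrite -mulr_sumr sum_step mulr1.
Qed.

Lemma sum_vdist n : \sum_o vdist x0 p y n.+1 o = 1.
Proof.
under eq_bigr do rewrite vdistS.
rewrite exchange_big -[RHS](sum_hprob n); apply: eq_bigr => t _ /=.
by rewrite -mulr_sumr sum_step mulr1.
Qed.

Lemma hprob_ge0 h : 0 <= hprob x0 p y h.
Proof.
elim: h => [|o h IH] //=; apply: mulr_ge0 => //.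
by case: h {IH} => [|o' h] /=; apply: mulr_ge0; apply: fac_ge0.
Qed.

Lemma vdist_ge0 n o : 0 <= vdist x0 p y n o.
Proof. by apply: sumr_ge0 => t _; apply: hprob_ge0. Qed.

Lemma cesaro_ge0 n o : 0 <= cesaro x0 p y n o.
Proof.
apply: mulr_ge0; first by rewrite invr_ge0 ler0n.
by apply: sumr_ge0 => k _; apply: vdist_ge0.
Qed.

Lemma sum_cesaro n : \sum_o cesaro x0 p y n.+1 o = 1.
Proof.
rewrite /cesaro -mulr_sumr exchange_big.
rewrite (eq_big_nat _ _ (F2 := fun _ => 1)); last first.
  by move=> [|k] // _; rewrite sum_vdist.
by rewrite sumr_const_nat subn1 mulVf // pnatr_eq0.
Qed.

Definition xcoop n := \sum_o vdist x0 p y n o * (x_coop o)%:R.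

Lemma xcoopSS k : xcoop k.+2 = \sum_o vdist x0 p y k.+1 o * p o.
Proof.
rewrite /xcoop; under eq_bigr do rewrite vdistSS mulr_suml.
rewrite exchange_big; apply: eq_bigr => o _.
rewrite vdistS mulr_suml; under eq_bigr do rewrite mulr_suml.
rewrite exchange_big; apply: eq_bigr => t _.
rewrite -[p o in RHS](sum_xcoop_fac (p o) (y (o :: t))) mulr_sumr.
by apply: eq_bigr => o' _; ring.
Qed.

Lemma xcoop_range n : 0 <= xcoop n.+1 <= 1.
Proof.
apply/andP; split.
  by apply: sumr_ge0 => o _; apply: mulr_ge0; rewrite ?vdist_ge0 ?ler0n.
rewrite -(sum_vdist n); apply: ler_sum => o _.
by case: x_coop; rewrite ?mulr1 ?mulr0 ?vdist_ge0.
Qed.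

Lemma cesaro_weighted n (c : outcome -> R) :
  \sum_o cesaro x0 p y n o * c o =
  n%:R^-1 * \sum_(1 <= k < n.+1) \sum_o vdist x0 p y k o * c o.
Proof.
rewrite /cesaro exchange_big mulr_sumr; apply: eq_bigr => o _.
by rewrite -mulrA mulr_suml.
Qed.

Lemma limit_dist_approx v (c : outcome -> R) :
  limit_dist x0 p y v -> (forall o, `|c o| <= 1) ->
  forall eps, 0 < eps -> forall N, exists2 n, (N <= n)%N &
    `|\sum_o v o * c o - \sum_o cesaro x0 p y n o * c o| <= eps.
Proof.
move=> lim_v c_le1 eps eps_gt0 N.
have [|n [le_Nn close_n]] := lim_v (eps / 4) _ N; first exact: divr_gt0.
exists n => //; rewrite -sumrB; apply: le_trans (ler_norm_sum _ _ _) _.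
have -> : eps = \sum_(o : outcome) eps / 4 by rewrite sum_outcome; field.
apply: ler_sum => o _; rewrite -mulrBl normrM distrC -[eps / 4]mulr1.
by apply: ler_pM => //; apply: ltW.
Qed.

Lemma limit_dist_ge0 v o : limit_dist x0 p y v -> 0 <= v o.
Proof.
move=> lim_v; rewrite leNgt; apply/negP => v_lt0.
have [|n [_ close_n]] := lim_v (- v o) _ 0%N; first by rewrite oppr_gt0.
have := close_n o; have := cesaro_ge0 n o; rewrite ltr_norml => ? /andP[? ?]; lra.
Qed.

Lemma limit_dist_sum v : limit_dist x0 p y v -> \sum_o v o = 1.
Proof.
move=> lim_v; apply/eqP; rewrite -subr_eq0 -normr_le0.
apply/ler_addgt0Pr => eps eps_gt0; rewrite add0r.
have [|[|n] //] := limit_dist_approx (c := fun => 1) lim_v _ eps_gt0 1.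
  by move=> o; rewrite normr1.
by under eq_bigr do rewrite mulr1; under [X in _ - X]eq_bigr do rewrite mulr1;
   rewrite sum_cesaro.
Qed.

Lemma limit_dist_akin v :
  limit_dist x0 p y v -> \sum_o v o * (p o - (x_coop o)%:R) = 0.
Proof.
move=> lim_v; set c := fun o => p o - (x_coop o)%:R.
have c_le1 o : `|c o| <= 1.
  have := p_range o; rewrite /c ler_norml.
  by case: x_coop; rewrite /= ?mulr1n ?mulr0n => /andP[? ?]; apply/andP; split; lra.
have ces_c n : `|\sum_o cesaro x0 p y n.+1 o * c o| <= n.+1%:R^-1.
  rewrite cesaro_weighted.
  rewrite (telescope_sumr_eq xcoop) // => [|[|k] //= _]; last first.
    by rewrite xcoopSS /xcoop -sumrB; apply: eq_bigr => o _; rewrite /c; ring.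
  rewrite normrM ger0_norm ?invr_ge0 ?ler0n // ler_piMr ?invr_ge0 ?ler0n //.
  have := xcoop_range n.+1; have := xcoop_range 0.
  by move=> /andP[? ?] /andP[? ?]; rewrite ler_norml; apply/andP; split; lra.
apply/eqP; rewrite -normr_le0; apply/ler_addgt0Pr => eps eps_gt0; rewrite add0r.
have eps2_gt0 : 0 < eps / 2 by apply: divr_gt0.
have [m small_m] := eventually_div_natS_lt 1 eps2_gt0.
have [[|n] // le_mn close_n] := limit_dist_approx lim_v c_le1 eps2_gt0 m.+1.
have := small_m n le_mn; rewrite div1r => small_n.
rewrite -(subrK (\sum_o cesaro x0 p y n.+1 o * c o) (\sum_o v o * c o)).
apply: le_trans (ler_normD _ _) _; rewrite [leRHS]splitr.
exact: lerD close_n (ltW (le_lt_trans (ces_c n) small_n)).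
Qed.

Lemma limit_dist_akin_distribution v :
  limit_dist x0 p y v -> akin_distribution p v.
Proof.
move=> lim_v; split=> [o||].
- exact: limit_dist_ge0.
- exact: limit_dist_sum.
- exact: limit_dist_akin.
Qed.

Lemma limit_dist_stationary (pi : outcome -> R) :
  (forall k o, vdist x0 p y k.+2 o = pi o) -> limit_dist x0 p y pi.
Proof.
move=> stat eps eps_gt0 N.
have ces_pi n o : cesaro x0 p y n.+1 o - pi o = (vdist x0 p y 1 o - pi o) / n.+1%:R.
  rewrite /cesaro big_ltn // (eq_big_nat _ _ (F2 := fun _ => pi o)); last first.
    by move=> [|[|k]] // _; rewrite stat.
  rewrite sumr_const_nat subSS subn1 /= -mulr_natr -natr1.
  by field; rewrite natr1 pnatr_eq0.
set C := \sum_o `|vdist x0 p y 1 o - pi o|.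
have [m small_m] := eventually_div_natS_lt C eps_gt0.
exists (N + m).+1; split; first by rewrite ltnW // ltnS leq_addr.
move=> o; rewrite ces_pi normrM normfV normr_nat.
apply: le_lt_trans (small_m _ (leq_addl N m)).
rewrite ler_pM2r ?invr_gt0 ?ltr0n // /C (bigD1 o) //= lerDl.
by apply: sumr_ge0.
Qed.

End Play.

Lemma memory_one_vec4 (R : realType) (a b c d : R) :
  0 <= a <= 1 -> 0 <= b <= 1 -> 0 <= c <= 1 -> 0 <= d <= 1 ->
  memory_one (vec4 a b c d).
Proof. by move=> ? ? ? ?; case=> [[|[|[|[|k]]]] ?]. Qed.

Section Probes.
Variables (R : realType) (p2 p3 p4 : R).
Local Notation p := (vec4 1 p2 p3 p4).

(* Y defects after cc with probability p3 and cooperates otherwise.  Its first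
   two moves are tuned so that the play is already stationary from round 2 on. *)
Lemma limit_dist_defect_after_cc :
  0 <= p2 <= 1 -> 0 <= p3 <= 1 -> 0 < 1 + p3 - p2 ->
  exists x0 y, [/\ 0 <= x0 <= 1, valid_pattern y &
    limit_dist x0 p y (vec4 (1 / (2 + p3 - p2)) (p3 / (2 + p3 - p2))
                            ((1 - p2) / (2 + p3 - p2)) 0)].
Proof.
move=> p2_range p3_range E_gt0; have D_neq0 : 2 + p3 - p2 != 0 by rewrite gt_eqF //; lra.
have E_neq0 : 1 + p3 - p2 != 0 by rewrite gt_eqF.
set r1 := (1 - p2) / (1 + p3 - p2); set y0 := (1 + p3 - p2) / (2 + p3 - p2).
have r1_range : 0 <= r1 <= 1.
  apply/andP; split; first by apply: divr_ge0; lra.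
  by rewrite ler_pdivrMr //; lra.
have y0_range : 0 <= y0 <= 1.
  apply/andP; split; first by apply: divr_ge0; lra.
  by rewrite ler_pdivrMr //; lra.
pose y h := match h with
            | [::] => y0
            | [:: o] => vec4 r1 1 1 1 o
            | o :: _ => vec4 (1 - p3) 1 1 1 o end.
exists 1, y; split; first by rewrite ler01 lexx.
  have q_range : 0 <= 1 - p3 <= 1 by lra.
  have one_range : 0 <= (1 : R) <= 1 by rewrite ler01 lexx.
  by case=> [|o [|o' h]] //; apply: memory_one_vec4.
apply: limit_dist_stationary; elim=> [|k IH] o'.
  rewrite (@vdistSS_markov _ _ _ y 0 (vec4 r1 1 1 1)) => [|o t]; last by rewrite [t]tuple0.
  rewrite sum_outcome !vdist1 /= /r1 /y0.
  by case: o' => [[|[|[|[|k]]]] ?] //; rewrite /vec4 /=; field; rewrite ?D_neq0 ?E_neq0.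
rewrite (@vdistSS_markov _ _ _ y k.+1 (vec4 (1 - p3) 1 1 1)) => [|o [[|a s] ?]] //.
rewrite sum_outcome !IH.
by case: o' => [[|[|[|[|j]]]] ?] //; rewrite /vec4 /=; field; rewrite ?D_neq0.
Qed.

(* Y always defects; X's first move is drawn from the stationary law of its own
   cooperation against all-D. *)
Lemma limit_dist_all_defect :
  0 <= p2 <= 1 -> 0 <= p4 -> 0 < 1 - p2 + p4 ->
  exists x0 y, [/\ 0 <= x0 <= 1, valid_pattern y &
    limit_dist x0 p y (vec4 0 (p4 / (1 - p2 + p4)) 0 (1 - p4 / (1 - p2 + p4)))].
Proof.
move=> p2_range p4_ge0 D_gt0; have D_neq0 : 1 - p2 + p4 != 0 by rewrite gt_eqF.
set a := p4 / (1 - p2 + p4).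
have a_range : 0 <= a <= 1.
  apply/andP; split; first by apply: divr_ge0; lra.
  by rewrite ler_pdivrMr //; lra.
exists a, (fun => 0); split=> //; first by move=> h; rewrite lexx ler01.
have stat k o : vdist a p (fun => 0) k.+1 o = vec4 0 a 0 (1 - a) o.
  elim: k o => [|k IH] o'.
    by rewrite vdist1; case: o' => [[|[|[|[|k]]]] ?] //; rewrite /vec4 /=; ring.
  rewrite (@vdistSS_markov _ _ _ _ k (fun => 0)) // sum_outcome !IH.
  by case: o' => [[|[|[|[|j]]]] ?] //; rewrite /vec4 /a /=; field.
by apply: limit_dist_stationary => k o; rewrite stat.
Qed.

End Probes.

Lemma good_nash_type (R : realType) (T Rw P S : R) (p : outcome -> R) :
  good T Rw P S p -> nash_type T Rw P S p.
Proof. by case=> agr good_p; split=> // x0 y v *; case: (good_p x0 y v). Qed.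

Lemma nash_type_payY_le (R : realType) (T Rw P S : R) (p : outcome -> R) x0 y v :
  nash_type T Rw P S p -> 0 <= x0 <= 1 -> valid_pattern y -> limit_dist x0 p y v ->
  payY T Rw P S v <= Rw.
Proof.
case=> _ nash x0_range y_range lim_v.
have [/(nash x0 y v x0_range y_range lim_v) -> // | /ltW //] := lerP Rw (payY T Rw P S v).
Qed.

Lemma good_payX_eq (R : realType) (T Rw P S : R) (p : outcome -> R) x0 y v :
  good T Rw P S p -> 0 <= x0 <= 1 -> valid_pattern y -> limit_dist x0 p y v ->
  payY T Rw P S v = Rw -> payX T Rw P S v = Rw.
Proof.
case=> _ good_p x0_range y_range lim_v sY_R.
by case: (good_p x0 y v x0_range y_range lim_v); rewrite ?sY_R.
Qed.

Lemma divr_mul_le (R : realFieldType) (a c x d : R) :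
  0 < a -> (c / a * x <= d) = (c * x - d * a <= 0).
Proof. by move=> a_gt0; rewrite mulrAC ler_pdivrMr // subr_le0. Qed.

Lemma divr_mul_lt (R : realFieldType) (a c x d : R) :
  0 < a -> (c / a * x < d) = (c * x - d * a < 0).
Proof. by move=> a_gt0; rewrite mulrAC ltr_pdivrMr // subr_lt0. Qed.

Section PrisonersDilemma.
Variables (R : realType) (T Rw P S p2 p3 p4 : R).
Local Notation p := (vec4 1 p2 p3 p4).
Local Notation sY v := (payY T Rw P S v).
Local Notation sX v := (payX T Rw P S v).

Definition gain_dc := (T - Rw) * p3 - (1 - p2) * (Rw - S).
Definition gain_dd := (T - Rw) * p4 - (1 - p2) * (Rw - P).

Lemma payY_outcome v : sY v = v cc * Rw + v cd * T + v dc * S + v dd * P.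
Proof. by rewrite /payY sum_outcome. Qed.

Lemma payX_outcome v : sX v = v cc * Rw + v cd * S + v dc * T + v dd * P.
Proof. by rewrite /payX sum_outcome. Qed.

Lemma akin_distribution_vec4 v : akin_distribution p v ->
  [/\ 0 <= v cd, 0 <= v dc, 0 <= v dd, v cc + v cd + v dc + v dd = 1 &
      v cd * (1 - p2) = v dc * p3 + v dd * p4].
Proof.
case=> v_ge0 sum_v akin; move: sum_v akin; rewrite !sum_outcome /vec4 /= => ? ?.
by split; rewrite ?v_ge0 //; lra.
Qed.

Lemma payY_gain v : akin_distribution p v ->
  (1 - p2) * (sY v - Rw) = v dc * gain_dc + v dd * gain_dd.
Proof.
case/akin_distribution_vec4 => _ _ _ sum_v akin.
rewrite payY_outcome /gain_dc /gain_dd.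
have -> : v cc = 1 - v cd - v dc - v dd by lra.
transitivity ((T - Rw) * (v cd * (1 - p2)) - (1 - p2) * (v dc * (Rw - S) + v dd * (Rw - P)));
  by [ring | rewrite akin; ring].
Qed.

Lemma p2_lt1 : Rw < T -> p2 <= 1 -> 0 <= p3 -> 0 <= p4 ->
  (1 : R, p2, p3, p4) <> (1, 1, 0, 0) -> gain_dc <= 0 -> gain_dd <= 0 -> p2 < 1.
Proof.
move=> TR p2_le1 p3_ge0 p4_ge0 p_neq; rewrite /gain_dc /gain_dd ltNge => g_dc g_dd.
apply/negP => p2_ge1; apply: p_neq.
have p2E : p2 = 1 by apply/le_anti; rewrite p2_le1.
rewrite p2E subrr !mul0r subr0 in g_dc g_dd.
have p3E : p3 = 0 by apply/le_anti; rewrite p3_ge0 andbT; nra.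
have p4E : p4 = 0 by apply/le_anti; rewrite p4_ge0 andbT; nra.
by rewrite p2E p3E p4E.
Qed.

Lemma payY_le v : p2 < 1 -> akin_distribution p v ->
  gain_dc <= 0 -> gain_dd <= 0 -> sY v <= Rw.
Proof.
move=> p2_lt1 akin_v g_dc g_dd; have gain_eq := payY_gain akin_v.
case/akin_distribution_vec4: akin_v => _ v_dc v_dd _ _.
have : (1 - p2) * (sY v - Rw) <= 0 by rewrite gain_eq; nra.
by rewrite pmulr_rle0 ?subr_gt0 // subr_le0.
Qed.

Lemma payX_eq v : Rw < T -> p2 < 1 -> akin_distribution p v ->
  gain_dc < 0 -> gain_dd < 0 -> sY v = Rw -> sX v = Rw.
Proof.
move=> TR p2_lt1 akin_v g_dc g_dd sY_R; have := payY_gain akin_v.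
rewrite sY_R subrr mulr0.
case/akin_distribution_vec4: akin_v => v_cd v_dc v_dd sum_v akin gain_eq0.
have v_dc0 : v dc = 0 by apply/le_anti; rewrite v_dc andbT; nra.
have v_dd0 : v dd = 0 by apply/le_anti; rewrite v_dd andbT; nra.
have v_cd0 : v cd = 0 by apply/le_anti; rewrite v_cd andbT; nra.
have v_cc1 : v cc = 1 by lra.
by rewrite payX_outcome v_cc1 v_cd0 v_dc0 v_dd0; ring.
Qed.

Lemma defect_after_cc_payoffs : 0 <= p2 <= 1 -> 0 <= p3 <= 1 -> 0 < 1 + p3 - p2 ->
  exists x0 y v, [/\ 0 <= x0 <= 1, valid_pattern y, limit_dist x0 p y v,
    sY v = Rw + gain_dc / (2 + p3 - p2) &
    sX v = Rw + (p3 * (S - Rw) + (1 - p2) * (T - Rw)) / (2 + p3 - p2)].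
Proof.
move=> p2_range p3_range E_gt0; have D_neq0 : 2 + p3 - p2 != 0 by rewrite gt_eqF //; lra.
have [x0 [y [x0_range y_range lim]]] := limit_dist_defect_after_cc p4 p2_range p3_range E_gt0.
exists x0, y; eexists; split; [exact: x0_range | exact: y_range | exact: lim | |];
  by rewrite ?payY_outcome ?payX_outcome /vec4 /gain_dc /=; field.
Qed.

Lemma all_defect_payoffs : S < P -> P < Rw -> 0 <= p2 <= 1 -> 0 <= p4 -> 0 < 1 - p2 + p4 ->
  exists x0 y v, [/\ 0 <= x0 <= 1, valid_pattern y, limit_dist x0 p y v,
    sY v = Rw + gain_dd / (1 - p2 + p4) & sX v < Rw].
Proof.
move=> SP PR p2_range p4_ge0 D_gt0; have D_neq0 : 1 - p2 + p4 != 0 by rewrite gt_eqF.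
have [x0 [y [x0_range y_range lim]]] := limit_dist_all_defect p3 p2_range p4_ge0 D_gt0.
exists x0, y; eexists; split; [exact: x0_range | exact: y_range | exact: lim | |].
  by rewrite payY_outcome /vec4 /gain_dd /=; field.
have a_range : 0 <= p4 / (1 - p2 + p4) <= 1.
  apply/andP; split; first by apply: divr_ge0; lra.
  by rewrite ler_pdivrMr //; lra.
rewrite payX_outcome /vec4 /=; move: a_range; move: (p4 / _) => a /andP[? ?]; nra.
Qed.

Lemma nash_type_iff : Rw < T -> P < Rw -> S < P ->
  0 <= p2 <= 1 -> 0 <= p3 <= 1 -> 0 <= p4 <= 1 -> (1 : R, p2, p3, p4) <> (1, 1, 0, 0) ->
  nash_type T Rw P S p <-> gain_dc <= 0 /\ gain_dd <= 0.
Proof.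
move=> TR PR SP p2_range p3_range p4_range p_neq.
case/andP: (p2_range) (p3_range) (p4_range) => p2_ge0 p2_le1 /andP[p3_ge0 _] /andP[p4_ge0 _].
split=> [nash | [g_dc g_dd]].
  split; rewrite leNgt; apply/negP => g_gt0.
    have E_gt0 : 0 < 1 + p3 - p2 by move: g_gt0; rewrite /gain_dc; nra.
    have [x0 [y [v [x0_range y_range lim sY_v _]]]] :=
      defect_after_cc_payoffs p2_range p3_range E_gt0.
    have := nash_type_payY_le nash x0_range y_range lim.
    have : 0 < gain_dc / (2 + p3 - p2) by apply: divr_gt0 => //; lra.
    by rewrite sY_v; lra.
  have E_gt0 : 0 < 1 - p2 + p4 by move: g_gt0; rewrite /gain_dd; nra.
  have [x0 [y [v [x0_range y_range lim sY_v _]]]] :=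
    all_defect_payoffs SP PR p2_range p4_ge0 E_gt0.
  have := nash_type_payY_le nash x0_range y_range lim.
  have : 0 < gain_dd / (1 - p2 + p4) by apply: divr_gt0.
  by rewrite sY_v; lra.
have p2_lt1 := p2_lt1 TR p2_le1 p3_ge0 p4_ge0 p_neq g_dc g_dd.
have p_mem : memory_one p by apply: memory_one_vec4; rewrite ?lexx ?ler01.
split=> // x0 y v x0_range y_range lim sY_ge; apply/le_anti; rewrite sY_ge andbT.
by apply: payY_le g_dc g_dd => //; apply: limit_dist_akin_distribution lim.
Qed.

Lemma good_iff : Rw < T -> P < Rw -> S < P -> T + S < 2 * Rw ->
  0 <= p2 <= 1 -> 0 <= p3 <= 1 -> 0 <= p4 <= 1 -> (1 : R, p2, p3, p4) <> (1, 1, 0, 0) ->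
  good T Rw P S p <-> gain_dc < 0 /\ gain_dd < 0.
Proof.
move=> TR PR SP TS p2_range p3_range p4_range p_neq.
have nash_iff := nash_type_iff TR PR SP p2_range p3_range p4_range p_neq.
case/andP: (p2_range) (p3_range) (p4_range) => p2_ge0 p2_le1 /andP[p3_ge0 _] /andP[p4_ge0 _].
split=> [good_p | [g_dc g_dd]]; last first.
  have [_ nash] := nash_iff.2 (conj (ltW g_dc) (ltW g_dd)).
  have p2_lt1 := p2_lt1 TR p2_le1 p3_ge0 p4_ge0 p_neq (ltW g_dc) (ltW g_dd).
  have p_mem : memory_one p by apply: memory_one_vec4; rewrite ?lexx ?ler01.
  split=> // x0 y v x0_range y_range lim sY_ge.
  have sY_R := nash x0 y v x0_range y_range lim sY_ge.
  by split=> //; apply: payX_eq sY_R => //; apply: limit_dist_akin_distribution lim.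
have [g_dc g_dd] := nash_iff.1 (good_nash_type good_p).
have p2_lt1 := p2_lt1 TR p2_le1 p3_ge0 p4_ge0 p_neq g_dc g_dd.
split; rewrite lt_neqAle ?g_dc ?g_dd andbT; apply/eqP => g0.
  have E_gt0 : 0 < 1 + p3 - p2 by lra.
  have [x0 [y [v [x0_range y_range lim sY_v sX_v]]]] :=
    defect_after_cc_payoffs p2_range p3_range E_gt0.
  rewrite g0 mul0r addr0 in sY_v.
  rewrite (good_payX_eq good_p x0_range y_range lim sY_v) in sX_v.
  have : (p3 * (S - Rw) + (1 - p2) * (T - Rw)) / (2 + p3 - p2) < 0.
    rewrite pmulr_llt0 ?invr_gt0; last by lra.
    (* (R - S) times the numerator is p3 ((T - R)^2 - (R - S)^2) and T + S < 2 R. *)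
    by move: g0; rewrite /gain_dc; nra.
  by lra.
have E_gt0 : 0 < 1 - p2 + p4 by lra.
have [x0 [y [v [x0_range y_range lim sY_v sX_lt]]]] :=
  all_defect_payoffs SP PR p2_range p4_ge0 E_gt0.
rewrite g0 mul0r addr0 in sY_v.
by rewrite (good_payX_eq good_p x0_range y_range lim sY_v) ltxx in sX_lt.
Qed.

End PrisonersDilemma.

Unset Implicit Arguments.
Set Strict Implicit.

Theorem theorem1p5 (R : realType) (T Rw P S : R)
  (hTR : Rw < T) (hRP : P < Rw) (hPS : S < P) (h2R : T + S < 2 * Rw)
  (p1 p2 p3 p4 : R)
  (hp1 : 0 <= p1 <= 1) (hp2 : 0 <= p2 <= 1)
  (hp3 : 0 <= p3 <= 1) (hp4 : 0 <= p4 <= 1)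
  (hagr : agreeable (vec4 p1 p2 p3 p4))
  (hne : (p1, p2, p3, p4) <> (1, 1, 0, 0)) :
  (nash_type T Rw P S (vec4 p1 p2 p3 p4) <->
     (T - Rw) / (Rw - S) * p3 <= 1 - p2 /\ (T - Rw) / (Rw - P) * p4 <= 1 - p2)
  /\
  (good T Rw P S (vec4 p1 p2 p3 p4) <->
     (T - Rw) / (Rw - S) * p3 < 1 - p2 /\ (T - Rw) / (Rw - P) * p4 < 1 - p2).
Proof.
have p1E : p1 = 1 := hagr; subst p1.
have RS_gt0 : 0 < Rw - S by rewrite subr_gt0; apply: lt_trans hRP.
have RP_gt0 : 0 < Rw - P by rewrite subr_gt0.
rewrite !divr_mul_le ?divr_mul_lt //.
split; [exact: nash_type_iff | exact: good_iff].
Qed.
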